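(* Let $d\geqslant 1$. (1) The subset $\mathbb{N}^d$ has complements in $\mathbb{Z}^d$. (2) $\mathbb{N}^d$ has no minimal complement in $\mathbb{Z}^d$. (3) No complement of $\mathbb{N}^d$ in $\mathbb{Z}^d$ contains a minimal complement of $\mathbb{N}^d$.
   Context: $\mathbb{N}=\{0,1,2,\dots\}$. A nonempty set $M\subseteq\mathbb{Z}^d$ is a complement of $W\subseteq \mathbb{Z}^d$ if $W+M=\mathbb{Z}^d$; it is a minimal complement if no proper subset of $M$ is a complement of $W$. *)

From mathcomp Require Import all_boot all_order all_algebra.
Set Implicit Arguments. Unset Strict Implicit. Unset Printing Implicit Defensive.
Import Order.TTheory GRing.Theory Num.Theory.
Local Open Scope ring_scope.

Definition Zd (d : nat) := 'rV[int]_d.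

Definition Nd (d : nat) : Zd d -> Prop := fun v => forall i : 'I_d, 0 <= v ord0 i.

Definition is_complement (d : nat) (W M : Zd d -> Prop) : Prop :=
  (exists m, M m) /\
  forall z : Zd d, exists w m, W w /\ M m /\ z = w + m.

Definition is_minimal_complement (d : nat) (W M : Zd d -> Prop) : Prop :=
  is_complement W M /\
  forall M' : Zd d -> Prop,
    (forall x, M' x -> M x) -> (exists x, M x /\ ~ M' x) -> ~ is_complement W M'.

(* A set M is a complement of N^d exactly when every point of Z^d dominates,
   coordinatewise, some point of M.  This property survives the removal of any
   single point m0 of M: below a point z, look for an element of M dominated by
   the coordinatewise minimum of z and m0 - (1, ..., 1); it is then strictly
   below m0 in every coordinate, hence different from m0 as soon as d >= 1.
   So no complement of N^d is minimal, while Z^d itself is a complement. *)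
From mathcomp Require Import all_boot all_order all_algebra.
Set Implicit Arguments. Unset Strict Implicit. Unset Printing Implicit Defensive.
Import Order.TTheory GRing.Theory Num.Theory.
Local Open Scope ring_scope.

Lemma complement_setT (d : nat) (W : Zd d -> Prop) :
  W 0 -> is_complement W (fun _ => True).
Proof.
move=> W0; split; first by exists 0.
by move=> z; exists 0, z; rewrite add0r.
Qed.

Lemma not_minimal_complement_of_setD1 (d : nat) (W : Zd d -> Prop) :
  (forall M m0, is_complement W M -> is_complement W (fun x => M x /\ x <> m0)) ->
  forall M, ~ is_minimal_complement W M.
Proof.
move=> complW_D1 M [complM minM]; have [m0 Mm0] := complM.1.
apply: (minM (fun x => M x /\ x <> m0)) (complW_D1 M m0 complM).
- by move=> x [].
- by exists m0; split=> // -[].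
Qed.

Section ComplementsOfNd.

Variable d : nat.
Hypothesis d_gt0 : (0 < d)%N.

Definition lev (u v : Zd d) : Prop := forall i, u ord0 i <= v ord0 i.

Lemma Nd_subr (z m : Zd d) : Nd (z - m) <-> lev m z.
Proof. by split=> le_mz i; move: (le_mz i); rewrite !mxE subr_ge0. Qed.

Lemma complement_NdP (M : Zd d -> Prop) :
  is_complement (@Nd d) M <-> forall z, exists2 m, M m & lev m z.
Proof.
split=> [[_ complM] z | domM].
- have [w [m [Nw [Mm ->]]]] := complM z.
  by exists m => // i; rewrite mxE lerDr; apply: Nw.
- split; first by have [m Mm _] := domM 0; exists m.
  move=> z; have [m Mm le_mz] := domM z.
  by exists (z - m), m; rewrite subrK; split; first exact/Nd_subr.
Qed.

Lemma complement_Nd_setD1 (M : Zd d -> Prop) (m0 : Zd d) :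
  is_complement (@Nd d) M -> is_complement (@Nd d) (fun x => M x /\ x <> m0).
Proof.
move=> /complement_NdP domM; apply/complement_NdP => z.
pose z' : Zd d := \row_i Num.min (z ord0 i) (m0 ord0 i - 1).
have [m Mm le_mz'] := domM z'.
have lt_m_m0 i : m ord0 i < m0 ord0 i.
  by apply: (le_lt_trans (le_mz' i)); rewrite mxE gt_min ltrBlDr ltrDl ltr01 orbT.
exists m; last by move=> i; apply: le_trans (le_mz' i) _; rewrite mxE ge_min lexx.
by split=> // m_eq_m0; have := lt_m_m0 (Ordinal d_gt0); rewrite m_eq_m0 ltxx.
Qed.

End ComplementsOfNd.

Theorem corollary3p2 (d : nat) (hd : (1 <= d)%N) :
  (exists M : Zd d -> Prop, is_complement (@Nd d) M) /\
  (forall M : Zd d -> Prop, ~ is_minimal_complement (@Nd d) M) /\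
  (forall M : Zd d -> Prop, is_complement (@Nd d) M ->
     ~ exists M' : Zd d -> Prop,
         (forall x, M' x -> M x) /\ is_minimal_complement (@Nd d) M').
Proof.
have no_minimal := not_minimal_complement_of_setD1 (complement_Nd_setD1 hd).
split; [|split].
- by exists (fun _ => True); apply: complement_setT => i; rewrite mxE.
- exact: no_minimal.
- by move=> M _ [M' [_ minM']]; apply: (no_minimal M').
Qed.
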